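(* Let $\varphi,\psi\in G$ satisfy $\lim_{t\to 0+}\psi(t)/\varphi(t)=0$, and let $F$ be a symmetric space on $[0,1]$ whose fundamental function is $\psi$. Then $\Lambda(\varphi)\subset F$ and the identity inclusion operator $I:\Lambda(\varphi)\to F$ is disjointly strictly singular.
   Context: All functions are Lebesgue measurable on $[0,1]$, $\mu$ is Lebesgue measure, and $x^*$ denotes the decreasing left-continuous rearrangement of $|x|$. A symmetric space (SS) on $[0,1]$ is a Banach space $E$ of measurable functions on $[0,1]$ such that: (1) if $y\in E$ and $|x(t)|\le |y(t)|$ then $x\in E$ and $\|x\|\le\|y\|$; (2) if $y\in E$ and $x,y$ are equimeasurable (i.e. $\mu\{|x|>\tau\}=\mu\{|y|>\tau\}$ for all $\tau>0$) then $x\in E$ and $\|x\|=\|y\|$. The fundamental function of $E$ is $f_E(t)=\|\chi_{(0,t)}\|_E$. $G$ denotes the class of all positive increasing concave functions on $(0,1]$. For $\varphi\in G$, the Lorentz space $\Lambda(\varphi)$ consists of all measurable $x$ with $\|x\|_{\Lambda(\varphi)}=\int_0^1 x^*(s)\,d\varphi(s)<\infty$. A bounded linear operator $T$ from a Banach lattice $X$ into a Banach space $Y$ is disjointly strictly singular (DSS) if there is no sequence of nonzero pairwise disjoint elements $x_n\in X$ such that the restriction of $T$ to their closed linear span $[x_n]$ is an isomorphism (onto its image). *)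

(* Functions on [0,1] are modelled as R -> R
   (values outside [0,1] are irrelevant), Lebesgue measure is mathcomp's
   lebesgue_measure on the Borel sets of R. *)
From HB Require Import structures.
From mathcomp Require Import all_boot all_order all_algebra.
From mathcomp Require Import all_classical all_reals all_analysis.
Set Implicit Arguments. Unset Strict Implicit. Unset Printing Implicit Defensive.
Import Order.TTheory GRing.Theory Num.Theory.
Import numFieldNormedType.Exports.
Local Open Scope classical_set_scope.
Local Open Scope ring_scope.

Section Defs.
Variable R : realType.
Local Notation mu := (@lebesgue_measure R).

Definition I01 : set R := `[0%R, 1%R].
Definition I01oc : set R := `]0%R, 1%R].

Definition meas01 (x : R -> R) : Prop := measurable_fun I01 x.

Definition distrib (x : R -> R) (tau : R) : \bar R :=
  mu ([set t | I01 t /\ (tau < `|x t|)%R]).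

(* decreasing left-continuous rearrangement x^* of |x|:
   x^*(s) = inf { tau >= 0 : mu{|x| > tau} < s }  for s > 0, and
   x^*(0) = inf { tau >= 0 : mu{|x| > tau} = 0 } = ess sup |x| = x^*(0+). *)
Definition xstar (x : R -> R) (s : R) : \bar R :=
  ereal_inf [set (tau%:E)%E | tau in
    [set tau : R | (0 <= tau)%R /\ ((distrib x tau < s%:E)%E \/ distrib x tau = 0%E)]].

Definition ae_zero01 (x : R -> R) : Prop :=
  mu ([set t | I01 t /\ x t != 0]) = 0%E.

Definition ae_le01 (x y : R -> R) : Prop :=
  mu ([set t | I01 t /\ (`|y t| < `|x t|)%R]) = 0%E.

Definition equimeasurable (x y : R -> R) : Prop :=
  forall tau : R, (0 < tau)%R -> distrib x tau = distrib y tau.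

Definition symmetric_space (E : set (R -> R)) (N : (R -> R) -> R) : Prop :=
  (forall x, E x -> meas01 x) /\
  [/\
      E (fun _ => 0%R)
      /\ (forall x y, E x -> E y -> E (fun t => x t + y t))
      /\ (forall (a : R) x, E x -> E (fun t => a * x t)),
      (forall x, E x -> 0 <= N x)
      /\ (forall x, E x -> (N x = 0 <-> ae_zero01 x))
      /\ (forall x y, E x -> E y -> N (fun t => x t + y t) <= N x + N y)
      /\ (forall (a : R) x, E x -> N (fun t => a * x t) = `|a| * N x),
      (forall u : nat -> R -> R, (forall n, E (u n)) ->
         (forall e : R, 0 < e -> exists n0 : nat, forall n m : nat,
            (n0 <= n)%N -> (n0 <= m)%N -> N (fun t => u n t - u m t) < e) ->
         exists x, E x /\ forall e : R, 0 < e -> exists n0 : nat, forall n : nat,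
            (n0 <= n)%N -> N (fun t => u n t - x t) < e),
      (forall x y, E y -> meas01 x -> ae_le01 x y -> E x /\ N x <= N y) &
      (forall x y, E y -> meas01 x -> equimeasurable x y -> E x /\ N x = N y)].

Definition classG (phi : R -> R) : Prop :=
  [/\ (forall t, I01oc t -> 0 < phi t),
      (forall s t, I01oc s -> I01oc t -> s <= t -> phi s <= phi t) &
      (forall s t l, I01oc s -> I01oc t -> 0 <= l -> l <= 1 ->
         l * phi s + (1 - l) * phi t <= phi (l * s + (1 - l) * t))].

(* dphi is the Lebesgue-Stieltjes measure d(phi) on [0,1] (with phi(0) := 0,
   so that a possible jump phi(0+) is a point mass at 0):
   dphi [0,b] = phi b for all b in (0,1].  This determines dphi on the Borel
   subsets of [0,1]. *)
Definition stieltjes_of (phi : R -> R)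
    (dphi : {measure set (measurableTypeR R) -> \bar R}) : Prop :=
  forall b, I01oc b -> dphi `[0%R, b]%classic = (phi b)%:E.

Definition lorentz_norm (dphi : {measure set (measurableTypeR R) -> \bar R})
    (x : R -> R) : \bar R :=
  (\int[dphi]_(s in I01) xstar x s)%E.

Definition in_lorentz dphi (x : R -> R) : Prop :=
  meas01 x /\ (lorentz_norm dphi x < +oo)%E.

Definition disjoint01 (x y : R -> R) : Prop :=
  mu ([set t | I01 t /\ x t != 0 /\ y t != 0]) = 0%E.

Definition lin_span (xs : nat -> R -> R) : set (R -> R) :=
  [set y | exists (k : nat) (a : nat -> R),
     y = fun t => \sum_(i < k) a i * xs i t].

Definition closed_span_lorentz dphi (xs : nat -> R -> R) : set (R -> R) :=
  [set x | in_lorentz dphi x /\ forall e : R, 0 < e -> exists y, lin_span xs y /\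
     (lorentz_norm dphi (fun t => (x t - y t)%R) < e%:E)%E].

(* The inclusion I : Lambda(phi) -> F (assumed to land in F) is DSS:
   no sequence of nonzero pairwise disjoint x_n in Lambda(phi) on whose closed
   linear span I is an isomorphism onto its image (i.e. bounded below). *)
Definition inclusion_DSS dphi (N : (R -> R) -> R) : Prop :=
  ~ exists xs : nat -> R -> R,
      [/\ (forall n, in_lorentz dphi (xs n)),
          (forall n, ~ ae_zero01 (xs n)),
          (forall n m, n <> m -> disjoint01 (xs n) (xs m)) &
          exists c : R, 0 < c /\ forall x, closed_span_lorentz dphi xs x ->
             ((c%:E * lorentz_norm dphi x)%E <= (N x)%:E)%E].

End Defs.

(* Slice |x| into layers of height h: |x| <= sup_M sum_(j < M) h 1_{|x| > j h}, and
   ||1_{|x| > j h}||_F = psi(mu{|x| > j h}).  If psi <= K phi on (0, d], where d is the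
   measure of the support of x, the F-norms of these layer sums are bounded by
   h psi(1) + K sum_j h phi(mu{|x| > (j+1) h}), and the last sum is a lower Riemann sum
   of int x^* dphi.  So the layer sums are Cauchy in F, and completeness together with
   the lattice property gives x in F with ||x||_F <= K ||x||_Lambda(phi) (let h -> 0).
   Since psi/phi -> 0 at 0, K is arbitrarily small for small d, and any sequence of
   pairwise disjoint functions on [0,1] has members with supports of arbitrarily small
   measure: the inclusion is not bounded below on the span of a disjoint sequence. *)

From HB Require Import structures.
From mathcomp Require Import all_boot all_order all_algebra.
From mathcomp Require Import all_classical all_reals all_analysis.
From mathcomp Require Import lra.
Set Implicit Arguments.
Unset Strict Implicit.
Unset Printing Implicit Defensive.

Import Order.TTheory GRing.Theory Num.Theory.
Import numFieldNormedType.Exports.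
Local Open Scope classical_set_scope.
Local Open Scope ring_scope.

Arguments I01 {R}.

(* Unlike [le_measure], no measurability is needed: off the measurable sets
   [lebesgue_measure] is the outer measure. *)
Lemma le_lebesgue_measure {R : realType} {A B : set R} :
  A `<=` B -> (lebesgue_measure A <= lebesgue_measure B)%E.
Proof.
by move=> AB; rewrite /lebesgue_measure /lebesgue_stieltjes_measure /measure_extension /=;
  exact: le_outer_measure.
Qed.

Lemma lebesgue_measure_cover0 (R : realType) (A : set R) (F : nat -> set R) :
  A `<=` \bigcup_n F n -> (forall n, lebesgue_measure (F n) = 0%E) ->
  lebesgue_measure A = 0%E.
Proof.
move=> AF F0; apply/eqP; rewrite eq_le measure_ge0 andbT.
apply: (le_trans (le_lebesgue_measure AF)).
apply: (@le_trans _ _ (\sum_(0 <= n <oo) lebesgue_measure (F n))%E); last first.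
  by rewrite eseries0.
rewrite /lebesgue_measure /lebesgue_stieltjes_measure /measure_extension /=.
exact: outer_measure_sigma_subadditive.
Qed.

(* The rearrangement [xstar x] is integrated without ever being shown measurable. *)
Lemma ge0_le_integral_nonmeas d (T : measurableType d) (R : realType)
    (mu : {measure set T -> \bar R}) (D : set T) (f1 f2 : T -> \bar R) :
  (forall t, D t -> (0 <= f1 t)%E) -> (forall t, D t -> (f1 t <= f2 t)%E) ->
  (\int[mu]_(t in D) f1 t <= \int[mu]_(t in D) f2 t)%E.
Proof.
move=> f10 f12.
have f20 t : D t -> (0 <= f2 t)%E by move=> Dt; exact: le_trans (f10 _ Dt) (f12 _ Dt).
rewrite !ge0_integralE //.
apply: ge_ereal_sup => _ [h Hh <-]; apply: ereal_sup_ubound; exists h => //= t.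
exact: le_trans (Hh t) (lee_restrict _ _).
Qed.

Section Distribution.
Variable R : realType.
Local Notation mu := (@lebesgue_measure R).
Implicit Types (x : R -> R) (tau : R).

Lemma lebesgue_I01 : mu I01 = 1%:E.
Proof. by rewrite /I01 lebesgue_measure_itv /= lte_fin ltr01 sube0. Qed.

Definition level_set x tau : set R := [set t | I01 t /\ tau < `|x t|].

Definition distribr x tau : R := fine (distrib x tau).

Lemma distribE x tau : distrib x tau = mu (level_set x tau).
Proof. by []. Qed.

Lemma distrib_le1 x tau : (distrib x tau <= 1%:E)%E.
Proof. by rewrite -lebesgue_I01; apply: le_lebesgue_measure => t []. Qed.

Lemma distribEr x tau : distrib x tau = (distribr x tau)%:E.
Proof.
rewrite /distribr fineK // fin_numE; apply/andP; split.
  by rewrite gt_eqF // (lt_le_trans _ (measure_ge0 _ _)) ?ltNyr.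
by rewrite lt_eqF // (le_lt_trans (distrib_le1 _ _)) ?ltry.
Qed.

Lemma distribr_ge0 x tau : 0 <= distribr x tau.
Proof. by rewrite -lee_fin -distribEr measure_ge0. Qed.

Lemma distribr_le1 x tau : distribr x tau <= 1.
Proof. by rewrite -lee_fin -distribEr distrib_le1. Qed.

Lemma distribr_nonincr x s t : s <= t -> distribr x t <= distribr x s.
Proof.
move=> st; rewrite -lee_fin -!distribEr; apply: le_lebesgue_measure => u [Iu tu].
by split => //; exact: le_lt_trans tu.
Qed.

Lemma measurable_level_set x tau : meas01 x -> 0 <= tau ->
  measurable (level_set x tau).
Proof.
move=> mx t0.
have -> : level_set x tau = I01 `&` x @^-1` (`]tau, +oo[ `|` `]-oo, - tau[).
  apply/seteqP; split => u /=.
    move=> [Iu tu]; split => //; rewrite !in_itv /= andbT.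
    have [xu0|xu0] := leP 0 (x u).
      by left; move: tu; rewrite ger0_norm.
    by right; move: tu; rewrite ltr0_norm // ltrNr.
  rewrite !in_itv /= andbT => -[Iu [tu|tu]]; split => //.
    by rewrite (lt_le_trans tu) // ler_norm.
  by rewrite -normrN (lt_le_trans _ (ler_norm _)) // ltrNr.
apply: mx; first exact: measurable_itv.
by apply: measurableU; exact: measurable_itv.
Qed.

Lemma distrib_indic (B : set R) tau : 0 < tau ->
  distrib (\1_B) tau = if tau < 1 then mu (I01 `&` B) else 0%E.
Proof.
move=> t0; rewrite /distrib; case: ifPn => t1.
  congr (mu _); apply/seteqP; split => u /=.
    move=> [Iu]; rewrite indicE; case: (boolP (u \in B)) => [/set_mem //|_].
    by rewrite normr0 ltNge (ltW t0).
  by move=> [Iu Bu]; split => //; rewrite indicE mem_set // normr1.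
rewrite [X in mu X](_ : _ = set0) ?measure0 //.
apply/seteqP; split => u //= [Iu]; rewrite indicE.
case: (u \in B); rewrite ?normr1 ?normr0 => h; first by move: t1; rewrite h.
by move: t0; rewrite ltNge (ltW h).
Qed.

Lemma equimeasurable_indic_itv (A : set R) (d : R) :
  A `<=` I01 -> mu A = d%:E ->
  equimeasurable (\1_A) (\1_(`]0, d[%classic : set R)).
Proof.
move=> AI Ad tau tau0; rewrite !distrib_indic //; case: ifPn => // _.
have d0 : 0 <= d by rewrite -lee_fin -Ad measure_ge0.
have d1 : d <= 1.
  by rewrite -lee_fin -Ad -lebesgue_I01; exact: le_lebesgue_measure.
rewrite setIidr // setIidr; last first.
  move=> u /=; rewrite in_itv /= => /andP[u0 ud].
  by rewrite /I01 /= in_itv /= (ltW u0) (le_trans (ltW ud)).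
rewrite lebesgue_measure_itv /= lte_fin sube0 Ad.
by case: ltP => // d_le0; apply/congr1/le_anti; rewrite d0 d_le0.
Qed.

End Distribution.

Section SymmetricSpace.
Variable R : realType.
Local Notation mu := (@lebesgue_measure R).
Implicit Types (x y z : R -> R).
Variables (E : set (R -> R)) (N : (R -> R) -> R).

Definition norm_cauchy (u : nat -> R -> R) := forall e : R, 0 < e ->
  exists n0 : nat, forall n m : nat,
    (n0 <= n)%N -> (n0 <= m)%N -> N (fun t => u n t - u m t) < e.

Definition norm_cvg (u : nat -> R -> R) z := forall e : R, 0 < e ->
  exists n0 : nat, forall n : nat, (n0 <= n)%N -> N (fun t => u n t - z t) < e.

Hypothesis HS : symmetric_space E N.

Lemma ss_meas {x} : E x -> meas01 x.
Proof. by case: HS => h _; exact: h. Qed.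

Lemma ss_mem0 : E (fun _ => 0).
Proof. by case: HS => _ [[h _] _ _ _ _]. Qed.

Lemma ss_memD {x y} : E x -> E y -> E (fun t => x t + y t).
Proof. by case: HS => _ [[_ [h _]] _ _ _ _]; exact: h. Qed.

Lemma ss_memZ (a : R) {x} : E x -> E (fun t => a * x t).
Proof. by case: HS => _ [[_ [_ h]] _ _ _ _]; exact: h. Qed.

Lemma ss_norm_ge0 {x} : E x -> 0 <= N x.
Proof. by case: HS => _ [_ [h _] _ _ _]; exact: h. Qed.

Lemma ss_norm_eq0 {x} : E x -> N x = 0 <-> ae_zero01 x.
Proof. by case: HS => _ [_ [_ [h _]] _ _ _]; exact: h. Qed.

Lemma ss_normD {x y} : E x -> E y -> N (fun t => x t + y t) <= N x + N y.
Proof. by case: HS => _ [_ [_ [_ [h _]]] _ _ _]; exact: h. Qed.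

Lemma ss_normZ (a : R) {x} : E x -> N (fun t => a * x t) = `|a| * N x.
Proof. by case: HS => _ [_ [_ [_ [_ h]]] _ _ _]; exact: h. Qed.

Lemma ss_complete (u : nat -> R -> R) : (forall n, E (u n)) -> norm_cauchy u ->
  exists2 z, E z & norm_cvg u z.
Proof. by case: HS => _ [_ _ h _ _] Eu /(h u Eu) [z []]; exists z. Qed.

Lemma ss_ideal {x y} : E y -> meas01 x -> ae_le01 x y -> E x /\ N x <= N y.
Proof. by case: HS => _ [_ _ _ h _]; exact: h. Qed.

Lemma ss_equimeasurable {x y} : E y -> meas01 x -> equimeasurable x y ->
  E x /\ N x = N y.
Proof. by case: HS => _ [_ _ _ _ h]; exact: h. Qed.

Lemma ss_norm0 : N (fun _ => 0) = 0.
Proof.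
have := ss_normZ 0 ss_mem0; rewrite normr0 [0 * N _]mul0r; apply: eq_trans.
by congr N; apply/funext => t; rewrite mul0r.
Qed.

Lemma ss_memN {x} : E x -> E (fun t => - x t).
Proof.
by move=> Ex; have := ss_memZ (-1) Ex; congr E; apply/funext => t; rewrite mulN1r.
Qed.

Lemma ss_normN {x} : E x -> N (fun t => - x t) = N x.
Proof.
move=> Ex; have := ss_normZ (-1) Ex; rewrite normrN normr1 mul1r => <-.
by congr N; apply/funext => t; rewrite mulN1r.
Qed.

Lemma ss_memB {x y} : E x -> E y -> E (fun t => x t - y t).
Proof. by move=> Ex Ey; apply: ss_memD => //; exact: ss_memN. Qed.

Lemma ss_distC {x y} : E x -> E y -> N (fun t => x t - y t) = N (fun t => y t - x t).
Proof.
move=> Ex Ey; rewrite -(ss_normN (ss_memB Ey Ex)).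
by congr N; apply/funext => t; rewrite opprB.
Qed.

Lemma ss_norm_le_dist {x y} : E x -> E y -> N y <= N x + N (fun t => x t - y t).
Proof.
move=> Ex Ey; have Exy := ss_memB Ex Ey.
rewrite -(ss_normN Exy) -[in leLHS](_ : (fun t => x t + - (x t - y t)) = y).
  exact: ss_normD (ss_memN Exy).
by apply/funext => t; rewrite opprB addrC subrK.
Qed.

Lemma ss_cauchy_of_increments (u : nat -> R -> R) (P : nat -> R) (B : R) :
  (forall n, E (u n)) ->
  (forall m n, (m <= n)%N -> N (fun t => u n t - u m t) <= P n - P m) ->
  (forall n, P n <= B) -> norm_cauchy u.
Proof.
move=> Eu incr PB e e0.
have P_nondecr m n : (m <= n)%N -> P m <= P n.
  move=> mn; rewrite -subr_ge0; apply: le_trans (incr _ _ mn).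
  exact/ss_norm_ge0/ss_memB.
pose S := [set P n | n in [set: nat]].
have supS : has_sup S by split; [exists (P 0%N), 0%N | exists B => _ [n _ <-]].
have [_ [n0 _ <-] Pn0] := sup_adherent e0 supS.
have incr_small m n : (n0 <= m)%N -> (m <= n)%N -> N (fun t => u n t - u m t) < e.
  move=> n0m mn; apply: (le_lt_trans (incr _ _ mn)).
  have Pn : P n <= sup S by apply: sup_upper_bound => //; exists n.
  apply: (@le_lt_trans _ _ (sup S - P n0)); first by rewrite lerB // P_nondecr.
  by rewrite ltrBlDr -ltrBlDl.
exists n0 => n m n0n n0m; have [mn|nm] := leqP m n; first exact: incr_small.
by rewrite ss_distC //; apply: incr_small => //; exact: ltnW.
Qed.

Lemma ss_le_limit (u : nat -> R -> R) z M :
  (forall n, E (u n)) -> E z ->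
  (forall t m n, (m <= n)%N -> u m t <= u n t) -> norm_cvg u z ->
  mu [set t | I01 t /\ z t < u M t] = 0%E.
Proof.
move=> Eu Ez u_nondecr uz.
pose w := (u M \- z) \max (cst 0).
have mw : meas01 w.
  apply: measurable_realfun.measurable_maxr; last exact: measurable_cst.
  by apply: measurable_realfun.measurable_funB; exact: ss_meas.
have w_small e : 0 < e -> E w /\ N w < e.
  move=> e0; have [n0 Hn0] := uz e e0; pose K := maxn n0 M.
  have ae : ae_le01 w (fun t => u K t - z t).
    apply/eqP; rewrite eq_le measure_ge0 andbT [X in mu X](_ : _ = set0) ?measure0 //.
    apply/seteqP; split => t //= [_]; apply/negP; rewrite -leNgt /w /=.
    have [uz0|] := leP 0 (u M t - z t); last by rewrite normr0 normr_ge0.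
    rewrite ger0_norm // (le_trans _ (ler_norm _)) // lerD2r.
    by apply: u_nondecr; rewrite leq_maxr.
  have [Ew Nw] := ss_ideal (ss_memB (Eu K) Ez) mw ae; split => //.
  by apply: (le_lt_trans Nw); apply: Hn0; rewrite leq_maxl.
have [Ew _] := w_small 1 ltr01.
have /(ss_norm_eq0 Ew) w_ae0 : N w = 0.
  apply/eqP; rewrite eq_le ss_norm_ge0 // andbT; apply/ler_addgt0Pr => e e0.
  by rewrite add0r; have [_ /ltW] := w_small e e0.
apply/eqP; rewrite eq_le measure_ge0 andbT -w_ae0.
apply: le_lebesgue_measure => t [It zu]; split => //.
by rewrite /w /= max_l ?subr_eq0 ?gt_eqF // subr_ge0 ltW.
Qed.

Lemma ss_norm_limit_le (u : nat -> R -> R) z B :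
  (forall n, E (u n)) -> E z -> (forall n, N (u n) <= B) -> norm_cvg u z ->
  N z <= B.
Proof.
move=> Eu Ez uB uz; apply/ler_addgt0Pr => e e0; have [n0 Hn0] := uz e e0.
apply: (le_trans (ss_norm_le_dist (Eu n0) Ez)).
by apply: lerD => //; exact/ltW/Hn0.
Qed.

End SymmetricSpace.

(* The convention [f 0 = 0]: a null level set has an indicator of norm 0. *)
Definition ext0 {R : realType} (f : R -> R) (d : R) : R := if 0 < d then f d else 0.

Definition layer_sum {R : realType} (x : R -> R) (h : R) (M : nat) : R -> R :=
  fun t => \sum_(j < M) h * \1_(level_set x (j%:R * h)) t.

Definition layer_weight {R : realType} (f x : R -> R) (h : R) (j : nat) : R :=
  h * ext0 f (distribr x (j%:R * h)).

Section LayerSum.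
Variable R : realType.
Implicit Types (x : R -> R) (h : R).

Lemma layer_sumS x h M t :
  layer_sum x h M.+1 t = layer_sum x h M t + h * \1_(level_set x (M%:R * h)) t.
Proof. by rewrite /layer_sum big_ord_recr. Qed.

Lemma layer_sum_nondecr x h m n t : 0 <= h -> (m <= n)%N ->
  layer_sum x h m t <= layer_sum x h n t.
Proof.
move=> h0 /subnKC <-; elim: (n - m)%N => [|k IH]; first by rewrite addn0.
by rewrite addnS layer_sumS (le_trans IH) // lerDl mulr_ge0 // indicE; case: (_ \in _).
Qed.

Lemma layer_sum_ge x h M t : 0 < h -> I01 t ->
  Num.min `|x t| (M%:R * h) <= layer_sum x h M t.
Proof.
move=> h0 It; elim: M => [|M IH].
  by rewrite mul0r /layer_sum big_ord0 ge_min lexx orbT.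
rewrite layer_sumS; have [xM|xM] := ltP (M%:R * h) `|x t|; last first.
  rewrite min_l; last by rewrite (le_trans xM) // ler_pM2r // ler_nat.
  move: IH; rewrite min_l // => IH; apply: (le_trans IH).
  by rewrite lerDl (mulr_ge0 (ltW h0)) // indicE.
move: IH; rewrite (min_r (ltW xM)) indicE mem_set // => IH.
by rewrite ge_min mulr1 -nat1r mulrDl mul1r [h + _]addrC lerD // orbT.
Qed.

End LayerSum.

Section FundamentalFunction.
Variable R : realType.
Implicit Types (x : R -> R) (h tau : R).
Variables (E : set (R -> R)) (N : (R -> R) -> R) (psi : R -> R).
Hypothesis HS : symmetric_space E N.
Hypothesis Hfund : forall t, I01oc t ->
  E (\1_(`]0, t[%classic : set R)) /\ N (\1_(`]0, t[%classic : set R)) = psi t.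

Lemma ss_indic_level_set x tau : meas01 x -> 0 <= tau ->
  E (\1_(level_set x tau)) /\ N (\1_(level_set x tau)) <= ext0 psi (distribr x tau).
Proof.
move=> mx tau0.
have m1 : meas01 (\1_(level_set x tau) : R -> R).
  by apply: measurable_realfun.measurable_indic; exact: measurable_level_set.
rewrite /ext0; case: ifPn => d0.
  have [Ed Nd] : E (\1_(`]0, distribr x tau[%classic : set R)) /\
      N (\1_(`]0, distribr x tau[%classic : set R)) = psi (distribr x tau).
    by apply: Hfund; rewrite /I01oc /= in_itv /= d0 distribr_le1.
  have eqm := equimeasurable_indic_itv (fun t => @proj1 _ _) (distribEr x tau).
  by have [E1 ->] := ss_equimeasurable HS Ed m1 eqm; rewrite Nd.
have null : distrib x tau = 0%E.
  by rewrite distribEr; congr _%:E; apply/le_anti; rewrite distribr_ge0 leNgt d0.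
have ae0 : ae_le01 (\1_(level_set x tau)) (fun _ => 0).
  apply/eqP; rewrite eq_le measure_ge0 andbT -null; apply: le_lebesgue_measure.
  move=> u [Iu]; rewrite normr0 indicE; case: (boolP (u \in _)) => [/set_mem //|].
  by rewrite normr0 ltxx.
by have [E1] := ss_ideal HS (ss_mem0 HS) m1 ae0; rewrite (ss_norm0 HS).
Qed.

Lemma layer_sum_mem x h M : meas01 x -> 0 <= h -> E (layer_sum x h M).
Proof.
move=> mx h0; elim: M => [|M IH].
  have -> : layer_sum x h 0 = fun _ => 0.
    by apply/funext => t; rewrite /layer_sum big_ord0.
  exact: ss_mem0 HS.
have -> : layer_sum x h M.+1 =
    fun t => layer_sum x h M t + h * \1_(level_set x (M%:R * h)) t.
  by apply/funext => t; exact: layer_sumS.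
apply: (ss_memD HS IH); apply: (ss_memZ HS).
by have [] := ss_indic_level_set mx (mulr_ge0 (ler0n _ M) h0).
Qed.

Lemma layer_sum_increment x h m n : meas01 x -> 0 <= h -> (m <= n)%N ->
  N (fun t => layer_sum x h n t - layer_sum x h m t) <=
    \sum_(j < n) layer_weight psi x h j - \sum_(j < m) layer_weight psi x h j.
Proof.
move=> mx h0 /subnKC <-; elim: (n - m)%N => [|k IH].
  rewrite addn0 subrr; under eq_fun => t do rewrite subrr.
  by rewrite (ss_norm0 HS).
have [Ei Ni] := ss_indic_level_set mx (mulr_ge0 (ler0n _ (m + k)) h0).
have Emk := layer_sum_mem (m + k) mx h0; have Em := layer_sum_mem m mx h0.
rewrite addnS big_ord_recr /= addrAC.
rewrite (_ : (fun t => _) = fun t => (layer_sum x h (m + k) t - layer_sum x h m t)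
    + h * \1_(level_set x ((m + k)%:R * h)) t); last first.
  by apply/funext => t; rewrite layer_sumS addrAC.
apply: (le_trans (ss_normD HS (ss_memB HS Emk Em) (ss_memZ HS h Ei))).
by rewrite (ss_normZ HS) // ger0_norm // lerD // ler_wpM2l.
Qed.

Lemma layer_sum_norm_le x h M : meas01 x -> 0 <= h ->
  N (layer_sum x h M) <= \sum_(j < M) layer_weight psi x h j.
Proof.
move=> mx h0.
have -> : layer_sum x h M = fun t => layer_sum x h M t - layer_sum x h 0 t.
  by apply/funext => t; rewrite /layer_sum [X in _ - X]big_ord0 subr0.
by have := layer_sum_increment mx h0 (leq0n M); rewrite big_ord0 subr0.
Qed.

Lemma ss_mem_of_layer_bound x h B : meas01 x -> 0 < h ->
  (forall M, \sum_(j < M) layer_weight psi x h j <= B) -> E x /\ N x <= B.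
Proof.
move=> mx h0 wB; have Eu M := layer_sum_mem M mx (ltW h0).
have cauchy := ss_cauchy_of_increments HS Eu
  (fun m n => layer_sum_increment mx (ltW h0)) wB.
have [z Ez uz] := ss_complete HS Eu cauchy.
have x_le_z : ae_le01 x z.
  pose below M := [set t | I01 t /\ z t < layer_sum x h M t].
  apply: (lebesgue_measure_cover0 (F := below)).
    move=> t [It zx]; exists (Num.truncn (`|x t| / h)).+1 => //; split => //.
    rewrite (le_lt_trans (ler_norm _)) // (lt_le_trans zx) //.
    apply: le_trans (layer_sum_ge x _ h0 It); rewrite le_min lexx /=.
    by rewrite -ler_pdivrMr // ltW // truncnS_gt.
  move=> M; apply: (ss_le_limit HS M Eu Ez _ uz) => t m n.
  exact: layer_sum_nondecr (ltW h0).
have [Ex Nxz] := ss_ideal HS Ez mx x_le_z; split => //.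
apply: (le_trans Nxz); apply: (ss_norm_limit_le HS Eu Ez _ uz) => n.
exact: le_trans (layer_sum_norm_le _ mx (ltW h0)) (wB n).
Qed.

End FundamentalFunction.

Section LorentzNorm.
Variable R : realType.
Implicit Types (x : R -> R) (h tau s : R).

Lemma xstar_ge0 x s : (0 <= xstar x s)%E.
Proof. by apply/ereal_infP => _ [t [t0 _] <-]; rewrite lee_fin. Qed.

Lemma xstar_ge x tau s : 0 <= tau -> 0 < distribr x tau -> s <= distribr x tau ->
  (tau%:E <= xstar x s)%E.
Proof.
move=> tau0 d0 sd; apply/ereal_infP => _ [sg [sg0 Hs] <-]; rewrite lee_fin leNgt.
apply/negP => sg_lt; have d_le := distribr_nonincr x (ltW sg_lt).
rewrite distribEr in Hs; case: Hs => [|[] d_sg0].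
  by rewrite lte_fin ltNge (le_trans sd d_le).
by move: (lt_le_trans d0 d_le); rewrite d_sg0 ltxx.
Qed.

Variables (phi : R -> R) (dphi : {measure set (measurableTypeR R) -> \bar R}).

Lemma lorentz_norm_ge0 x : (0 <= lorentz_norm dphi x)%E.
Proof. by apply: integral_ge0 => s _; exact: xstar_ge0. Qed.

Lemma lorentz_normEfin x : in_lorentz dphi x ->
  lorentz_norm dphi x = (fine (lorentz_norm dphi x))%:E.
Proof. by move=> [_ fin]; rewrite fineK // ge0_fin_numE // lorentz_norm_ge0. Qed.

Lemma lorentz_norm0 : lorentz_norm dphi (fun _ => 0) = 0%E.
Proof.
have xstar0 s : xstar (fun _ => 0) s = 0%E.
  apply/le_anti; rewrite xstar_ge0 andbT; apply: ereal_inf_lbound.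
  exists 0 => //; split => //; right.
  rewrite distribE [X in lebesgue_measure X](_ : _ = set0) ?measure0 //.
  by apply/seteqP; split => t // [_]; rewrite normr0 ltxx.
by rewrite /lorentz_norm (eq_integral (fun _ => 0%E)) ?integral0.
Qed.

Hypothesis Hst : stieltjes_of phi dphi.

Definition layer_itv x h (j : nat) : set R :=
  if 0 < distribr x (j%:R * h) then `[0, distribr x (j%:R * h)]%classic else set0.

Lemma measurable_layer_itv x h j : measurable (layer_itv x h j).
Proof. by rewrite /layer_itv; case: ifP => _ //; exact: measurable_itv. Qed.

Lemma integral_layer_itv x h j : 0 <= h ->
  (\int[dphi]_(s in I01) (h * \1_(layer_itv x h j) s)%:E = (layer_weight phi x h j)%:E)%E.
Proof.
move=> h0; under eq_integral => s _ do rewrite EFinM.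
have mI : measurable (@I01 R) by exact: measurable_itv.
rewrite ge0_integralZl_EFin //; last first.
  apply/measurable_realfun.measurable_EFinP; apply: measurable_realfun.measurable_indic.
  exact: measurable_layer_itv.
rewrite integral_indic //; last exact: measurable_layer_itv.
rewrite /layer_itv /layer_weight /ext0; case: ifPn => d0; last first.
  by rewrite set0I measure0 mule0 mulr0.
rewrite EFinM setIidl ?Hst //; first by rewrite /I01oc /= in_itv /= d0 distribr_le1.
move=> u; rewrite /= !in_itv /= => /andP[u0 ud].
by rewrite /I01 /= in_itv /= u0 (le_trans ud) ?distribr_le1.
Qed.

Lemma layer_itv_sum_le_xstar x h M s : 0 < h ->
  ((\sum_(j < M) h * \1_(layer_itv x h j.+1) s)%:E <= xstar x s)%E.
Proof.
move=> h0; elim: M => [|M IH]; first by rewrite big_ord0 xstar_ge0.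
rewrite big_ord_recr /= indicE; case: (boolP (s \in layer_itv x h M.+1)) => sC; last first.
  by rewrite mulr0 addr0.
move: sC; rewrite mulr1 /layer_itv; case: ifPn => d0; last by rewrite inE.
rewrite inE /= in_itv /= => /andP[s0 sd].
apply: le_trans (xstar_ge (mulr_ge0 (ler0n _ _) (ltW h0)) d0 sd); rewrite lee_fin.
rewrite -[M.+1%:R]natr1 mulrDl mul1r lerD2r.
apply: (le_trans (y := \sum_(j < M) h)); last by rewrite sumr_const card_ord mulr_natl.
by apply: ler_sum => j _; rewrite indicE; case: (_ \in _); rewrite ?mulr1 ?mulr0 // ltW.
Qed.

Lemma lorentz_norm_ge_layers x h M : 0 < h ->
  ((\sum_(j < M) layer_weight phi x h j.+1)%:E <= lorentz_norm dphi x)%E.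
Proof.
move=> h0; have mI : measurable (@I01 R) by exact: measurable_itv.
have indic_ge0 j s : (0 <= (h * \1_(layer_itv x h j.+1) s)%:E)%E.
  by rewrite lee_fin (mulr_ge0 (ltW h0)) // indicE; case: (_ \in _).
rewrite -sumEFin; under eq_bigr => j _ do rewrite -(integral_layer_itv x _ (ltW h0)).
rewrite -ge0_integral_sum //; last first.
  move=> j; apply/measurable_realfun.measurable_EFinP.
  apply: measurable_realfun.measurable_funM; first exact: measurable_cst.
  by apply: measurable_realfun.measurable_indic; exact: measurable_layer_itv.
apply: ge0_le_integral_nonmeas => [s _|s _]; first exact: sume_ge0.
by rewrite sumEFin; exact: layer_itv_sum_le_xstar.
Qed.

Lemma lorentz_norm_gt0 x : (forall t, I01oc t -> 0 < phi t) ->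
  in_lorentz dphi x -> ~ ae_zero01 x -> 0 < fine (lorentz_norm dphi x).
Proof.
move=> phi_gt0 Lx nz; have [k dk] : exists k : nat, 0 < distribr x (k.+1%:R^-1).
  apply: contrapT => /forallNP dk0; apply: nz.
  apply: (lebesgue_measure_cover0 (F := fun k : nat => level_set x (k.+1%:R^-1))).
    move=> t [It xt]; exists (Num.truncn (`|x t|^-1)) => //; split => //.
    have xt0 : 0 < `|x t| by rewrite normr_gt0.
    by rewrite -[X in _ < X]invrK ltf_pV2 ?posrE ?invr_gt0 // truncnS_gt.
  move=> k; rewrite -distribE distribEr; congr _%:E.
  by apply/le_anti; rewrite distribr_ge0 andbT leNgt; apply/negP => /(dk0 k).
have h0 : 0 < k.+1%:R^-1 :> R by rewrite invr_gt0.
have := lorentz_norm_ge_layers x 1 h0.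
rewrite big_ord1 /layer_weight mul1r (lorentz_normEfin Lx) lee_fin; apply: lt_le_trans.
by rewrite /ext0 dk mulr_gt0 // phi_gt0 // /I01oc /= in_itv /= dk distribr_le1.
Qed.

End LorentzNorm.

Lemma lebesgue_sum_le_bigcup (R : realType) (S : nat -> set R) (K : nat) :
  (forall n, measurable (S n)) ->
  (forall n m, n <> m -> lebesgue_measure (S n `&` S m) = 0%E) ->
  (\sum_(n < K) lebesgue_measure (S n) <= lebesgue_measure (\bigcup_(n in `I_K) S n))%E.
Proof.
move=> mS null; elim: K => [|K IH]; first by rewrite big_ord0 measure_ge0.
pose U := \bigcup_(n in `I_K) S n.
have mU : measurable U by apply: bigcup_measurable => n _; exact: mS.
have -> : \bigcup_(n in `I_K.+1) S n = U `|` (S K `\` U).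
  by rewrite IIS bigcup_setU bigcup_set1 setUDr setDv setD0.
have SK_U0 : lebesgue_measure (S K `&` U) = 0%E.
  apply: (lebesgue_measure_cover0 (F := fun n => if (n < K)%N then S K `&` S n else set0)).
    by move=> t [SKt [n /= nK Snt]]; exists n => //; rewrite nK.
  move=> n; case: ifPn => nK; last exact: measure0.
  by apply: null => Kn; move: nK; rewrite Kn ltnn.
rewrite measureU //; last 2 first.
- exact: measurableD (mS K) mU.
- by rewrite setDE setICA setICr setI0.
rewrite big_ord_recr /=; apply: leeD => //.
have := measureDI lebesgue_measure (mS K) mU.
by rewrite [X in _ = (_ + X)%E](_ : _ = 0%E) ?adde0 => [->|].
Qed.

Lemma disjoint01_small_support (R : realType) (xs : nat -> R -> R) (delta : R) :
  (forall n, meas01 (xs n)) -> (forall n m, n <> m -> disjoint01 (xs n) (xs m)) ->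
  0 < delta -> exists n, distribr (xs n) 0 < delta.
Proof.
move=> mxs dis d0; apply: contrapT => /forallNP small.
pose S n := level_set (xs n) 0.
have supp_ge n : (delta%:E <= lebesgue_measure (S n))%E.
  by rewrite -distribE distribEr lee_fin leNgt; apply/negP; exact: small.
have null n m : n <> m -> lebesgue_measure (S n `&` S m) = 0%E.
  move=> nm; rewrite -(dis n m nm); congr lebesgue_measure; apply/seteqP.
  split=> t; first by move=> [[It]]; rewrite normr_gt0 => ? [_]; rewrite normr_gt0.
  by move=> [It [? ?]]; split; split; rewrite ?normr_gt0.
pose K := (Num.truncn delta^-1).+1.
have U_le1 : (lebesgue_measure (\bigcup_(n in `I_K) S n) <= 1%:E)%E.
  by rewrite -(lebesgue_I01 R); apply: le_lebesgue_measure => t [n _ []].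
have mS n : measurable (S n) by exact: measurable_level_set.
have := le_trans (lebesgue_sum_le_bigcup K mS null) U_le1.
have sum_ge : ((K%:R * delta)%:E <= \sum_(n < K) lebesgue_measure (S n))%E.
  apply: (@le_trans _ _ (\sum_(n < K) delta%:E)%E); last exact: lee_sum.
  by rewrite sumEFin sumr_const card_ord mulr_natl.
move/(le_trans sum_ge); rewrite lee_fin leNgt => /negP; apply.
by have := truncnS_gt delta^-1; rewrite -(ltr_pM2r d0) mulVf ?gt_eqF.
Qed.

Section ClassG.
Variable R : realType.
Implicit Types (f g : R -> R) (s t : R).

Lemma classG_gt0 f t : classG f -> 0 < t -> t <= 1 -> 0 < f t.
Proof. by case=> f_gt0 _ _ t0 t1; apply: f_gt0; rewrite /I01oc /= in_itv /= t0 t1. Qed.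

Lemma classG_le f s t : classG f -> 0 < s -> s <= t -> t <= 1 -> f s <= f t.
Proof.
case=> _ f_le _ s0 st t1; have t0 := lt_le_trans s0 st.
by apply: f_le; rewrite // /I01oc /= in_itv /= ?s0 ?t0 ?t1 ?(le_trans st t1).
Qed.

Lemma ext0_le1 f d : classG f -> d <= 1 -> ext0 f d <= f 1.
Proof.
move=> Gf d1; rewrite /ext0; case: ifPn => [d0|_]; first exact: classG_le.
exact/ltW/(classG_gt0 Gf).
Qed.

Lemma ratio_small_near0 f g e : classG g ->
  (fun t => f t / g t) @ 0^'+ --> 0 -> 0 < e ->
  exists2 d, 0 < d & forall t, 0 < t -> t < d -> t <= 1 -> f t <= e * g t.
Proof.
move=> Gg fg0 e0; have [d /= d0 fg_small] := cvgr_dist_lt _ _ fg0 _ e0.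
exists d => // t t0 td t1; have := fg_small t.
rewrite /ball /= sub0r normrN (ger0_norm (ltW t0)) => /(_ td t0).
have gt := classG_gt0 Gg t0 t1.
rewrite sub0r normrN => /(le_lt_trans (ler_norm _)).
by rewrite ltr_pdivrMr // => /ltW.
Qed.

Lemma classG_ratio_bounded f g : classG f -> classG g ->
  (fun t => f t / g t) @ 0^'+ --> 0 ->
  exists2 K, 0 <= K & forall t, 0 < t -> t <= 1 -> f t <= K * g t.
Proof.
move=> Gf Gg fg0; have [d d0 fg_small] := ratio_small_near0 Gg fg0 ltr01.
pose m := Num.min d 1.
have m0 : 0 < m by rewrite lt_min d0 ltr01.
have m1 : m <= 1 by rewrite ge_min lexx orbT.
have f1 := classG_gt0 Gf ltr01 (lexx 1); have gm := classG_gt0 Gg m0 m1.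
exists (1 + f 1 / g m); first by rewrite addr_ge0 // divr_ge0 // ltW.
move=> t t0 t1; have gt := classG_gt0 Gg t0 t1.
have [td|dt] := ltP t d.
  by apply: (le_trans (fg_small t t0 td t1)); rewrite ler_pM2r // lerDl divr_ge0 // ltW.
apply: (le_trans (classG_le Gf t0 t1 (lexx 1))).
rewrite mulrDl mul1r; apply: (@le_trans _ _ (f 1 / g m * g t)); last first.
  by rewrite lerDr ltW.
rewrite -mulrA [_^-1 * _]mulrC -[X in X <= _]mulr1 ler_pM2l // ler_pdivlMr // mul1r.
by apply: classG_le; rewrite // ge_min dt.
Qed.

End ClassG.

Lemma closed_span_lorentz_mem (R : realType)
    (dphi : {measure set (measurableTypeR R) -> \bar R}) (xs : nat -> R -> R) n :
  in_lorentz dphi (xs n) -> closed_span_lorentz dphi xs (xs n).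
Proof.
move=> Lxn; split => // e e0.
exists (fun t => \sum_(i < n.+1) (i == n :> nat)%:R * xs i t); split.
  by exists n.+1, (fun i => (i == n)%:R).
rewrite (_ : (fun t => _) = fun _ => 0) ?lorentz_norm0 ?lte_fin //.
apply/funext => t; rewrite big_ord_recr /= eqxx mul1r big1 ?add0r ?subrr // => i _.
by rewrite (ltn_eqF (ltn_ord i)) mul0r.
Qed.

Section Embedding.
Variable R : realType.
Variables (phi psi : R -> R) (dphi : {measure set (measurableTypeR R) -> \bar R}).
Variables (E : set (R -> R)) (N : (R -> R) -> R).
Hypotheses (Gphi : classG phi) (Gpsi : classG psi).
Hypotheses (Hst : stieltjes_of phi dphi) (HS : symmetric_space E N).
Hypothesis Hfund : forall t, I01oc t ->
  E (\1_(`]0, t[%classic : set R)) /\ N (\1_(`]0, t[%classic : set R)) = psi t.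

Lemma ss_norm_le_lorentz x K : in_lorentz dphi x -> 0 <= K ->
  (forall d, 0 < d -> d <= distribr x 0 -> psi d <= K * phi d) ->
  E x /\ N x <= K * fine (lorentz_norm dphi x).
Proof.
move=> Lx K0 psi_le; have mx := Lx.1; set L := fine (lorentz_norm dphi x).
have L0 : 0 <= L by rewrite fine_ge0 // lorentz_norm_ge0.
have psi1 := classG_gt0 Gpsi ltr01 (lexx 1).
have weight_le h j : 0 < h -> layer_weight psi x h j.+1 <= K * layer_weight phi x h j.+1.
  move=> h0; rewrite /layer_weight mulrCA ler_pM2l // /ext0.
  case: ifPn => [d0|_]; last by rewrite mulr0.
  by apply: psi_le; rewrite // distribr_nonincr // mulr_ge0 // ltW.
have sum_le h : 0 < h -> forall M, \sum_(j < M) layer_weight psi x h j <= h * psi 1 + K * L.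
  move=> h0 [|M]; first by rewrite big_ord0 addr_ge0 // mulr_ge0 // ltW.
  rewrite big_ord_recl; apply: lerD.
    by rewrite ler_pM2l // ext0_le1 // distribr_le1.
  apply: (@le_trans _ _ (\sum_(j < M) K * layer_weight phi x h j.+1)).
    by apply: ler_sum => j _; rewrite lift0; exact: weight_le.
  rewrite -mulr_sumr ler_wpM2l // -lee_fin /L -lorentz_normEfin //.
  exact: lorentz_norm_ge_layers.
have [Ex _] := ss_mem_of_layer_bound HS Hfund mx ltr01 (sum_le 1 ltr01).
split => //; apply/ler_addgt0Pr => e e0.
have h0 : 0 < e / psi 1 by rewrite divr_gt0.
have [_] := ss_mem_of_layer_bound HS Hfund mx h0 (sum_le _ h0).
by rewrite mulfVK ?gt_eqF // addrC.
Qed.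

Hypothesis psi_phi0 : (fun t => psi t / phi t) @ 0^'+ --> 0.

Lemma lorentz_embedding : exists2 K, 0 <= K &
  forall x, in_lorentz dphi x -> E x /\ N x <= K * fine (lorentz_norm dphi x).
Proof.
have [K K0 psi_le] := classG_ratio_bounded Gpsi Gphi psi_phi0.
exists K => // x Lx; apply: (ss_norm_le_lorentz Lx K0) => d d0 dx.
by apply: psi_le; rewrite // (le_trans dx) // distribr_le1.
Qed.

Lemma lorentz_inclusion_DSS : inclusion_DSS dphi N.
Proof.
move=> [xs [Lxs nz dis [c [c0 c_le]]]].
have c20 : 0 < c / 2 by rewrite divr_gt0.
have [d d0 psi_small] := ratio_small_near0 Gphi psi_phi0 c20.
have [n small] := disjoint01_small_support (fun n => (Lxs n).1) dis d0.
have [_ Nx] : E (xs n) /\ N (xs n) <= c / 2 * fine (lorentz_norm dphi (xs n)).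
  apply: (ss_norm_le_lorentz (Lxs n) (ltW c20)) => t t0 tx.
  by apply: psi_small; rewrite // (le_lt_trans tx, le_trans tx) ?distribr_le1.
have := c_le _ (closed_span_lorentz_mem (Lxs n)).
rewrite (lorentz_normEfin (Lxs n)) -EFinM lee_fin => cL.
have phi_gt0 : forall t, I01oc t -> 0 < phi t by case: Gphi.
have L0 := lorentz_norm_gt0 Hst phi_gt0 (Lxs n) (nz n).
by have := le_trans cL Nx; rewrite ler_pM2r //; lra.
Qed.

End Embedding.

Theorem theorem1 (R : realType) (phi psi : R -> R)
    (dphi : {measure set (measurableTypeR R) -> \bar R})
    (E : set (R -> R)) (N : (R -> R) -> R) :
  classG phi -> classG psi ->
  (fun t => psi t / phi t) @ 0^'+ --> 0 ->
  stieltjes_of phi dphi ->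
  symmetric_space E N ->
  (forall t, I01oc t -> E (\1_(`]0, t[%classic : set R) : R -> R) /\ N (\1_(`]0, t[%classic : set R)) = psi t) ->
  (forall x, in_lorentz dphi x -> E x)
  /\ (exists C : R, 0 <= C /\ forall x, in_lorentz dphi x ->
        ((N x)%:E <= (C%:E * lorentz_norm dphi x)%E)%E)
  /\ inclusion_DSS dphi N.
Proof.
move=> Gphi Gpsi psi_phi0 Hst HS Hfund.
have [K K0 embed] := lorentz_embedding Gphi Gpsi Hst HS Hfund psi_phi0.
split; first by move=> x /embed [].
split; last exact: lorentz_inclusion_DSS Gphi Gpsi Hst HS Hfund psi_phi0.
exists K; split => // x Lx; have [_ Nx] := embed x Lx.
by rewrite (lorentz_normEfin Lx) -EFinM lee_fin.
Qed.
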